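(* Let $\lambda,\mu\in\mathbb{C}\setminus\{0,1\}$ and $a,b\in\mathbb{C}^n$ with $a\neq b$, let $G$ be the group generated by $f=(a,\lambda)$ and $g=(b,\mu)$, and let $L=\mathbb{C}(b-a)+a$. If $\overline{G(a)}=L$, then $\overline{G(z)}=L$ for every $z\in L$.
   Context: For $c\in\mathbb{C}^n$ and $\nu\in\mathbb{C}\setminus\{0,1\}$, $(c,\nu)$ denotes the map $z\mapsto\nu(z-c)+c$ of $\mathbb{C}^n$. $\mathbb{C}(b-a)+a=\{a+t(b-a):t\in\mathbb{C}\}$; $G(z)=\{h(z):h\in G\}$. *)

From Stdlib Require Import Reals.
From Stdlib Require Fin.
Open Scope R_scope.

Definition CC := (R * R)%type.
Definition CC0 : CC := (0, 0).
Definition CC1 : CC := (1, 0).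
Definition Cadd (z w : CC) : CC := (fst z + fst w, snd z + snd w).
Definition Copp (z : CC) : CC := (- fst z, - snd z).
Definition Csub (z w : CC) : CC := Cadd z (Copp w).
Definition Cmul (z w : CC) : CC :=
  (fst z * fst w - snd z * snd w, fst z * snd w + snd z * fst w).
Definition Cinv (z : CC) : CC :=
  let d := fst z * fst z + snd z * snd z in (fst z / d, - snd z / d).
Definition Cnorm (z : CC) : R := sqrt (fst z * fst z + snd z * snd z).

Definition Cn (n : nat) := Fin.t n -> CC.
Definition vadd {n} (u v : Cn n) : Cn n := fun i => Cadd (u i) (v i).
Definition vsub {n} (u v : Cn n) : Cn n := fun i => Csub (u i) (v i).
Definition vscale {n} (t : CC) (u : Cn n) : Cn n := fun i => Cmul t (u i).

(* The map (c, nu) : z |-> nu (z - c) + c *)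
Definition hmap {n} (c : Cn n) (nu : CC) (z : Cn n) : Cn n :=
  vadd (vscale nu (vsub z c)) c.

Inductive in_group {n} (a b : Cn n) (lam mu : CC) : (Cn n -> Cn n) -> Prop :=
| ig_id : in_group a b lam mu (fun z => z)
| ig_f  : forall h, in_group a b lam mu h ->
            in_group a b lam mu (fun z => hmap a lam (h z))
| ig_fi : forall h, in_group a b lam mu h ->
            in_group a b lam mu (fun z => hmap a (Cinv lam) (h z))
| ig_g  : forall h, in_group a b lam mu h ->
            in_group a b lam mu (fun z => hmap b mu (h z))
| ig_gi : forall h, in_group a b lam mu h ->
            in_group a b lam mu (fun z => hmap b (Cinv mu) (h z)).

Definition orbit {n} (a b : Cn n) (lam mu : CC) (z : Cn n) : Cn n -> Prop :=
  fun w => exists h, in_group a b lam mu h /\ w = h z.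

Definition closure {n} (S : Cn n -> Prop) : Cn n -> Prop :=
  fun w => forall eps, eps > 0 ->
    exists s, S s /\ forall i, Cnorm (Csub (w i) (s i)) < eps.

Definition cline {n} (a b : Cn n) : Cn n -> Prop :=
  fun w => exists t : CC, w = vadd (vscale t (vsub b a)) a.

(* The group G preserves the line L and acts on its parameter t, where
   z = t (b - a) + a, by the affine maps t |-> lam t and t |-> mu t + 1 - mu.
   The commutators of f and g are translations of C^n by +-beta (b - a), with
   beta = (lam - 1)(1 - mu) <> 0, and conjugating by the generators shows that
   G contains the translation by beta r (b - a) whenever r (b - a) + a lies in
   G(a).  Hence G(z) contains z + beta r (b - a) for every such r; as these r
   are dense in C, so are the points t + beta r, and G(z) is dense in L. *)
From Pilot Require Import Defs.
From Stdlib Require Import Reals Lra Classical FunctionalExtensionality.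
From Coquelicot Require Import Coquelicot.
Open Scope R_scope.

Lemma Defs_Cinv_eq (z : C) : Defs.Cinv z = Cinv z.
Proof. destruct z as [x y]; unfold Defs.Cinv, Cinv, Re, Im; simpl; f_equal; f_equal; ring. Qed.

Lemma Cnorm_Csub (z w : C) : Cnorm (Csub z w) = Cmod (z - w).
Proof. unfold Cnorm, Cmod; f_equal; simpl; ring. Qed.

Ltac to_Coquelicot :=
  change Csub with Cminus in *; change Cadd with Cplus in *;
  change Cmul with Cmult in *; change CC0 with (RtoC 0) in *;
  change CC1 with (RtoC 1) in *; rewrite ?Defs_Cinv_eq in *.

(* [ring] only recognises Coquelicot's field on terms typed [C], not [CC]. *)
Ltac generalize_components i :=
  repeat match goal with
         |- context [?v i] => let c := fresh "c" in generalize (v i : C); intro c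
         end;
  try lazymatch goal with |- @eq _ ?x ?y => change (@eq C x y) end.

Ltac vext :=
  apply functional_extensionality; let i := fresh "i" in intro i;
  unfold hmap, vadd, vscale, vsub; to_Coquelicot; generalize_components i.

Lemma hmap_commutator {n} (c1 c2 : Cn n) (l m : C) (x : Cn n) :
  l <> 0%C -> m <> 0%C ->
  hmap c1 l (hmap c2 m (hmap c1 (/ l)%C (hmap c2 (/ m)%C x)))
  = vadd x (vscale ((l - 1) * (1 - m))%C (vsub c2 c1)).
Proof. intros Hl Hm; vext; field; auto. Qed.

Lemma fin_pos_bound n (F : Fin.t n -> R) : exists M, 0 < M /\ forall i, F i <= M.
Proof.
  induction n as [|n IHn].
  - exists 1; split; [lra | intro i; inversion i].
  - destruct (IHn (fun i => F (Fin.FS i))) as [M [HM0 HM]].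
    exists (Rmax (F Fin.F1) M); split; [eapply Rlt_le_trans; [exact HM0 | apply Rmax_r]|].
    intro i; pattern i; apply Fin.caseS'.
    + apply Rmax_l.
    + intro p; eapply Rle_trans; [apply HM | apply Rmax_r].
Qed.

Lemma closure_mono {n} (S T : Cn n -> Prop) w :
  (forall x, S x -> T x) -> closure S w -> closure T w.
Proof.
  intros HST H eps Heps; destruct (H eps Heps) as [s [Hs Hclose]]; eauto.
Qed.

Lemma closure_idem {n} (S : Cn n -> Prop) w : closure (closure S) w -> closure S w.
Proof.
  intros H eps Heps.
  destruct (H (eps / 2)) as [s [Hs Hws]]; [lra|].
  destruct (Hs (eps / 2)) as [s' [Hs' Hss']]; [lra|].
  exists s'; split; [exact Hs'|]; intro i.
  specialize (Hws i); specialize (Hss' i); rewrite Cnorm_Csub in *.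
  replace (w i - s' i)%C with ((w i - s i) + (s i - s' i))%C by ring.
  eapply Rle_lt_trans; [apply Cmod_triangle | lra].
Qed.

Definition adherent (P : C -> Prop) (q : C) :=
  forall eps, eps > 0 -> exists r, P r /\ Cmod (q - r) < eps.

Lemma adherent_affine_image (P : C -> Prop) (t c : C) :
  c <> 0%C -> (forall q, adherent P q) ->
  forall s, adherent (fun u => exists r, P r /\ u = (t + c * r)%C) s.
Proof.
  intros Hc HP s eps Heps.
  pose proof (proj1 (Cmod_gt_0 c) Hc) as Hc'.
  destruct (HP ((s - t) / c)%C (eps / Cmod c)) as [r [Pr Hr]].
  { apply Rdiv_lt_0_compat; lra. }
  exists (t + c * r)%C; split; [eauto|].
  replace (s - (t + c * r))%C with (c * ((s - t) / c - r))%C by (field; exact Hc).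
  rewrite Cmod_mult.
  apply Rmult_lt_compat_l with (r := Cmod c) in Hr; [|exact Hc'].
  replace (Cmod c * (eps / Cmod c)) with eps in Hr by (field; lra).
  exact Hr.
Qed.

Section Line.
Context {n : nat} (a b : Cn n).

Definition line_pt (t : C) : Cn n := vadd (vscale t (vsub b a)) a.
Definition line_set (P : C -> Prop) : Cn n -> Prop :=
  fun w => exists r, P r /\ w = line_pt r.
Definition shift (v : C) (x : Cn n) : Cn n := vadd x (vscale v (vsub b a)).

Lemma a_line_pt : a = line_pt 0%C.
Proof. unfold line_pt; vext; ring. Qed.

Lemma hmap_a_line_pt nu r : hmap a nu (line_pt r) = line_pt (nu * r)%C.
Proof. unfold line_pt; vext; ring. Qed.

Lemma hmap_b_line_pt nu r : hmap b nu (line_pt r) = line_pt (nu * r + (1 - nu))%C.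
Proof. unfold line_pt; vext; ring. Qed.

Lemma shift_line_pt v r : shift v (line_pt r) = line_pt (r + v)%C.
Proof. unfold shift, line_pt; vext; ring. Qed.

Lemma line_pt_dist t r i :
  Cnorm (Csub (line_pt t i) (line_pt r i)) = Cmod (t - r)%C * Cmod (vsub b a i).
Proof.
  rewrite Cnorm_Csub, <- Cmod_mult; f_equal.
  unfold line_pt, vadd, vscale; to_Coquelicot; generalize_components i; ring.
Qed.

Lemma closure_line_set_adherent (P : C -> Prop) q :
  a <> b -> closure (line_set P) (line_pt q) -> adherent P q.
Proof.
  intros Hab Hq eps Heps.
  assert (Hi0 : exists i0, b i0 <> a i0).
  { apply not_all_ex_not; intro Hall; apply Hab.
    apply functional_extensionality; intro i; apply eq_sym, Hall. }
  destruct Hi0 as [i0 Hi0].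
  assert (Hd : 0 < Cmod (vsub b a i0)) by apply Cmod_gt_0, Cminus_eq_contra, Hi0.
  destruct (Hq (eps * Cmod (vsub b a i0))) as [w [[r [Pr ->]] Hw]].
  { apply Rmult_lt_0_compat; lra. }
  exists r; split; [exact Pr|].
  specialize (Hw i0); rewrite line_pt_dist in Hw.
  apply Rmult_lt_reg_r with (Cmod (vsub b a i0)); lra.
Qed.

Lemma adherent_closure_line_set (P : C -> Prop) s :
  adherent P s -> closure (line_set P) (line_pt s).
Proof.
  intros Hs eps Heps.
  destruct (fin_pos_bound n (fun i => Cmod (vsub b a i))) as [D [HD0 HD]].
  destruct (Hs (eps / D)) as [r [Pr Hr]]; [apply Rdiv_lt_0_compat; lra|].
  exists (line_pt r); split; [exists r; auto|]; intro i.
  rewrite line_pt_dist.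
  apply Rle_lt_trans with (Cmod (s - r)%C * D).
  - apply Rmult_le_compat_l; [apply Cmod_ge_0 | exact (HD i)].
  - apply Rmult_lt_compat_r with (r := D) in Hr; [|exact HD0].
    replace (eps / D * D) with eps in Hr by (field; lra).
    exact Hr.
Qed.

End Line.

Section Group.
Context {n : nat} (a b : Cn n) (lam mu : C).
Hypotheses (Hlam : lam <> 0%C) (Hmu : mu <> 0%C).

Local Notation G := (in_group a b lam mu).

Lemma in_group_comp h1 h2 : G h1 -> G h2 -> G (fun x => h1 (h2 x)).
Proof.
  intros H1 H2; induction H1; cbv beta;
    [exact H2 | apply ig_f | apply ig_fi | apply ig_g | apply ig_gi]; assumption.
Qed.

Lemma in_group_ext h k : G h -> (forall x, h x = k x) -> G k.
Proof. intros Hh E; replace k with h by (apply functional_extensionality, E); exact Hh. Qed.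

Lemma in_group_f : G (hmap a lam).
Proof. exact (ig_f _ _ _ _ _ (ig_id _ _ _ _)). Qed.

Lemma in_group_f_inv : G (hmap a (/ lam)%C).
Proof. rewrite <- Defs_Cinv_eq; exact (ig_fi _ _ _ _ _ (ig_id _ _ _ _)). Qed.

Lemma in_group_g : G (hmap b mu).
Proof. exact (ig_g _ _ _ _ _ (ig_id _ _ _ _)). Qed.

Lemma in_group_g_inv : G (hmap b (/ mu)%C).
Proof. rewrite <- Defs_Cinv_eq; exact (ig_gi _ _ _ _ _ (ig_id _ _ _ _)). Qed.

Lemma in_group_line h t : G h -> exists r, h (line_pt a b t) = line_pt a b r.
Proof.
  intro Hh; induction Hh as [|h _ [r E]|h _ [r E]|h _ [r E]|h _ [r E]]; cbv beta;
    [eauto | ..]; rewrite E, ?Defs_Cinv_eq, ?hmap_a_line_pt, ?hmap_b_line_pt; eauto.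
Qed.

Definition shift_in_group (v : C) := G (shift a b v).

Lemma shift_in_group_0 : shift_in_group 0%C.
Proof. apply (in_group_ext _ _ (ig_id _ _ _ _)); intro x; unfold shift; vext; ring. Qed.

Lemma shift_in_group_add v w :
  shift_in_group v -> shift_in_group w -> shift_in_group (v + w)%C.
Proof.
  intros Hv Hw; apply (in_group_ext _ _ (in_group_comp _ _ Hv Hw)).
  intro x; unfold shift; vext; ring.
Qed.

Lemma shift_in_group_conj c (nu nu' : C) v :
  G (hmap c nu) -> G (hmap c nu') -> (nu * nu' = 1)%C ->
  shift_in_group v -> shift_in_group (nu * v)%C.
Proof.
  intros Hnu Hnu' E Hv.
  assert (Hnu0 : nu <> 0%C) by (intro H0; rewrite H0, Cmult_0_l in E; exact (C1_nz (eq_sym E))).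
  assert (nu' = / nu)%C as -> by (rewrite <- (Cmult_1_l (/ nu)), <- E; field; exact Hnu0).
  apply (in_group_ext _ _ (in_group_comp _ _ Hnu (in_group_comp _ _ Hv Hnu'))).
  intro x; unfold shift; vext; field; exact Hnu0.
Qed.

Definition beta : C := ((lam - 1) * (1 - mu))%C.

Lemma shift_in_group_beta : shift_in_group beta.
Proof.
  apply (in_group_ext _ _ (in_group_comp _ _ in_group_f (in_group_comp _ _ in_group_g
          (in_group_comp _ _ in_group_f_inv in_group_g_inv)))).
  intro x; rewrite hmap_commutator by assumption; reflexivity.
Qed.

Lemma shift_in_group_opp_beta : shift_in_group (- beta)%C.
Proof.
  apply (in_group_ext _ _ (in_group_comp _ _ in_group_g (in_group_comp _ _ in_group_f
          (in_group_comp _ _ in_group_g_inv in_group_f_inv)))).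
  intro x; rewrite hmap_commutator by assumption; unfold shift, beta; vext; ring.
Qed.

Lemma orbit_param_shift h :
  G h -> exists r, h a = line_pt a b r /\ shift_in_group (beta * r)%C.
Proof.
  intro Hh; induction Hh as [|h _ [r [E T]]|h _ [r [E T]]|h _ [r [E T]]|h _ [r [E T]]];
    cbv beta; rewrite ?E, ?Defs_Cinv_eq, ?hmap_a_line_pt, ?hmap_b_line_pt.
  - exists 0%C; split; [apply a_line_pt|].
    replace (beta * 0)%C with (RtoC 0) by ring; exact shift_in_group_0.
  - eexists; split; [reflexivity|].
    replace (beta * (lam * r))%C with (lam * (beta * r))%C by ring.
    exact (shift_in_group_conj _ _ _ _ in_group_f in_group_f_inv (Cinv_r _ Hlam) T).
  - eexists; split; [reflexivity|].
    replace (beta * (/ lam * r))%C with (/ lam * (beta * r))%C by ring.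
    exact (shift_in_group_conj _ _ _ _ in_group_f_inv in_group_f (Cinv_l _ Hlam) T).
  - eexists; split; [reflexivity|].
    replace (beta * (mu * r + (1 - mu)))%C
      with (mu * (beta * r) + (beta + mu * - beta))%C by ring.
    pose proof (Cinv_r _ Hmu) as E'.
    apply shift_in_group_add; [|apply shift_in_group_add];
      eauto using shift_in_group_conj, in_group_g, in_group_g_inv,
        shift_in_group_beta, shift_in_group_opp_beta.
  - eexists; split; [reflexivity|].
    replace (beta * (/ mu * r + (1 - / mu)))%C
      with (/ mu * (beta * r) + (beta + / mu * - beta))%C by ring.
    pose proof (Cinv_l _ Hmu) as E'.
    apply shift_in_group_add; [|apply shift_in_group_add];
      eauto using shift_in_group_conj, in_group_g, in_group_g_inv,
        shift_in_group_beta, shift_in_group_opp_beta.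
Qed.

End Group.

Theorem lemma3p8 (n : nat) (lam mu : CC) (a b : Cn n) :
  lam <> CC0 -> lam <> CC1 -> mu <> CC0 -> mu <> CC1 -> a <> b ->
  (forall w, closure (orbit a b lam mu a) w <-> cline a b w) ->
  forall z, cline a b z ->
  forall w, closure (orbit a b lam mu z) w <-> cline a b w.
Proof.
  intros Hl0 Hl1 Hm0 Hm1 Hab Hyp z [t0 ->] w; fold (line_pt a b t0).
  set (shift_params := fun r => shift_in_group a b lam mu (beta lam mu * r)%C).
  assert (Hdense : forall q, adherent shift_params q).
  { intro q; apply (closure_line_set_adherent a b _ _ Hab).
    apply (closure_mono (orbit a b lam mu a)), Hyp; [|exists q; reflexivity].
    intros x [h [Hh ->]].
    destruct (orbit_param_shift a b lam mu Hl0 Hm0 h Hh) as [r [-> T]]; exists r; auto. }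
  split.
  - intro Hw; apply Hyp, closure_idem, (closure_mono (orbit a b lam mu (line_pt a b t0)));
      [|exact Hw].
    intros x [h [Hh ->]]; destruct (in_group_line a b lam mu h t0 Hh) as [r ->].
    apply Hyp; exists r; reflexivity.
  - intros [s ->]; fold (line_pt a b s).
    apply (closure_mono (line_set a b (fun u => exists r, shift_params r /\ u = (t0 + beta lam mu * r)%C))).
    + intros x [u [[r [T ->]] ->]]; exists (shift a b (beta lam mu * r)%C).
      split; [exact T | symmetry; apply shift_line_pt].
    + apply adherent_closure_line_set, adherent_affine_image; [|exact Hdense].
      apply Cmult_neq_0; apply Cminus_eq_contra; auto.
Qed.
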